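(* In the model described in the context, if correct readers sign their read requests and $\tau\ge 2f+1$, then Algorithm 1 with threshold $t=1$ satisfies both completeness and weak accuracy.
   Context: Model. An asynchronous system has client processes (writers, readers, auditors) and $n$ storage objects $o_1,\dots,o_n$. Each $o_k$ is a linearisable loggable read/write register with a log $L_k$ (initially empty). Its rw-write($b$) stores a block; rw-read() returns the current block and appends $\langle p_r,\mathit{label}(b)\rangle$ to $L_k$, where $p_r$ is the reader and $\mathit{label}(b)$ identifies the value from which $b$ was derived; rw-getLog() returns $L_k$. A multi-writer multi-reader register over values $\mathbb{V}$ is emulated by information dispersal. An a-write($v$) encodes $v$ into $b_{v_1},\dots,b_{v_n}$ with $b_{v_k}$ sent to $o_k$. Any $\tau$ distinct blocks of $v$ recover $v$, and fewer do not. Reads are fast, and concurrency is unlimited. Faults. Writers and auditors can only crash. Faulty readers may crash or contact a subset of objects. At most $f$ objects are faulty; a faulty object may crash, omit its block, omit log records from auditors, and report records of nonexistent reads. Signed reads: correct readers unforgeably sign their read requests, and a record counts only if accompanied by a valid signed request of the named reader. Hence a faulty object cannot create a correct record about a reader from which it never received a signed request. Providing set $P_{p_r,v}$: the set of objects that received a write of $b_{v_k}$ and responded $b_{v_k}$ to a read of $p_r$. The value $v$ is effectively read by $p_r$ iff $|P_{p_r,v}|\ge\tau$. Algorithm 1 (a-audit with threshold $t$): 1. Invoke rw-getLog on all $n$ objects in parallel, and wait for responses from at least $n-f$; let $L[k]$ be the log received from $o_k$. 2. For every record $\langle p_r,\mathit{label}(v)\rangle$ in some $L[k]$, let $\mathcal{E}_{p_r,v}=\{k:\langle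 p_r,\mathit{label}(v)\rangle\in L[k]\}$, and add it to $E_A$ iff $|\mathcal{E}_{p_r,v}|\ge t$. 3. Return $E_A$. Completeness: $|P_{p_r,v}|\ge\tau$ before the audit implies $\mathcal{E}_{p_r,v}\in E_A$. Weak accuracy: for every correct reader $p_r$ that never invoked an a-read before the audit, $\mathcal{E}_{p_r,v}\notin E_A$ for all $v$. *)

(* Abstract execution model for the auditable register of
   the paper: objects o_1..o_n are 'I_n, value labels live in V, readers in
   Reader.  An execution (up to the return of the audit) is given as
   [pre ++ dur]: [pre] is the sequence of (linearised) events before the audit
   is invoked, [dur] the events between the audit invocation and its
   response. *)
From mathcomp Require Import all_boot.
Set Implicit Arguments. Unset Strict Implicit. Unset Printing Implicit Defensive.

Inductive event (n : nat) (Reader V : Type) : Type :=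
(* reader p invokes an a-read *)
| InvRead of Reader
(* object o_k applies an rw-write of the block b_{v_k} of value v *)
| Write of 'I_n & V
(* object o_k receives a (signed) rw-read request of reader p and answers r:
   None = no answer (omission/crash), Some l = answers a block with label l
   (l = None is the initial empty block / a block derived from no value) *)
| Read of 'I_n & Reader & option (option V)
(* the auditor receives log L as the answer of o_k to its rw-getLog *)
| GetLog of 'I_n & seq (Reader * option V).

Arguments InvRead {n Reader V}.
Arguments Write {n Reader V}.
Arguments Read {n Reader V}.
Arguments GetLog {n Reader V}.

Section Model.
Variables (n : nat) (Reader V : eqType).
Local Notation ev := (event n Reader V).
Local Notation rec := (Reader * option V)%type.

Definition curblock (k : 'I_n) (s : seq ev) : option V :=
  foldl (fun b e => if e is Write k' v then (if k' == k then Some v else b) else b)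
        None s.

Definition read_record (k : 'I_n) (e : ev) : option rec :=
  if e is Read k' p (Some l) then (if k' == k then Some (p, l) else None) else None.

Definition log_of (k : 'I_n) (s : seq ev) : seq rec := pmap (read_record k) s.

Definition is_inv (p : Reader) (e : ev) : bool :=
  if e is InvRead p' then p' == p else false.
Definition is_read_req (k : 'I_n) (p : Reader) (e : ev) : bool :=
  if e is Read k' p' _ then (k' == k) && (p' == p) else false.
Definition write_of (k : 'I_n) (v : V) (e : ev) : bool :=
  if e is Write k' v' then (k' == k) && (v' == v) else false.
Definition resp_of (k : 'I_n) (p : Reader) (v : V) (e : ev) : bool :=
  if e is Read k' p' (Some (Some v')) then [&& k' == k, p' == p & v' == v]
  else false.
Definition is_getlog (e : ev) : bool := if e is GetLog _ _ then true else false.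
Definition getlog_at (k : 'I_n) (e : ev) : option (seq rec) :=
  if e is GetLog k' L then (if k' == k then Some L else None) else None.
Definition is_getlog_of (k : 'I_n) (e : ev) : bool := getlog_at k e != None.

(* correct (non-faulty) objects are linearisable loggable rw-registers *)
Definition correct_objects (F : {set 'I_n}) (pre dur : seq ev) : Prop :=
  forall k, k \notin F ->
    (forall s1 s2 p r, pre ++ dur = s1 ++ Read k p r :: s2 ->
        r = Some (curblock k s1)) /\
    (forall s1 s2 L, pre ++ dur = s1 ++ GetLog k L :: s2 -> L = log_of k s1).

Definition signed_reads (F : {set 'I_n}) (correctR : pred Reader)
    (pre dur : seq ev) : Prop :=
  forall k, k \in F -> forall s1 s2 L p l,
    pre ++ dur = s1 ++ GetLog k L :: s2 -> correctR p -> (p, l) \in L ->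
    has (is_read_req k p) s1.

Definition correct_readers (correctR : pred Reader) (pre dur : seq ev) : Prop :=
  forall s1 s2 k p r, pre ++ dur = s1 ++ Read k p r :: s2 -> correctR p ->
    has (is_inv p) s1.

Definition audit_structure (pre dur : seq ev) : Prop :=
  ~~ has is_getlog pre /\ forall k, count (is_getlog_of k) dur <= 1.

(* L[k] : None if o_k did not answer the audit *)
Definition logs (dur : seq ev) : 'I_n -> option (seq rec) :=
  fun k => ohead (pmap (getlog_at k) dur).

Definition responders (dur : seq ev) : {set 'I_n} :=
  [set k | logs dur k != None].

Definition evid (L : 'I_n -> option (seq rec)) (r : rec) : {set 'I_n} :=
  [set k | r \in odflt [::] (L k)].

Definition audit (t : nat) (L : 'I_n -> option (seq rec)) : seq (rec * {set 'I_n}) :=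
  undup [seq (r, evid L r) | r <- flatten [seq odflt [::] (L k) | k <- enum 'I_n]
                           & t <= #|evid L r|].

Definition providing (pre : seq ev) (p : Reader) (v : V) : {set 'I_n} :=
  [set k : 'I_n | has (write_of k v) pre && has (resp_of k p v) pre].

Definition completeness (t tau : nat) (pre dur : seq ev) : Prop :=
  forall p v, tau <= #|providing pre p v| ->
    ((p, Some v), evid (logs dur) (p, Some v)) \in audit t (logs dur).

Definition weak_accuracy (t : nat) (correctR : pred Reader) (pre dur : seq ev) : Prop :=
  forall p, correctR p -> ~~ has (is_inv p) (pre ++ dur) ->
    forall l, ((p, l), evid (logs dur) (p, l)) \notin audit t (logs dur).

End Model.

(** A reader that [tau >= 2f+1] objects provided with blocks of [v] is seen
    by at least [tau + (n - f) - n >= f + 1] of the [n - f] objects answering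
    the audit, hence by a correct one, whose log then truthfully records the
    read; threshold [1] therefore suffices for completeness.  Conversely, a
    record about a correct reader in any received log, correct or not, stems
    from a signed read request of that reader, which it only sends while
    performing an a-read. *)
From mathcomp Require Import all_boot.
From mathcomp Require Import zify.
Set Implicit Arguments. Unset Strict Implicit. Unset Printing Implicit Defensive.

Lemma has_split (T : Type) (a : pred T) (s : seq T) :
  has a s -> exists s1 x s2, s = s1 ++ x :: s2 /\ a x.
Proof.
elim: s => [//|x s IH] /=; case ax: (a x) => /=.
  by move=> _; exists [::], x, s.
by move=> /IH [s1 [y [s2 [-> ay]]]]; exists (x :: s1), y, s2.
Qed.

Lemma quorum_intersection (T : finType) (A B C : {set T}) :
  #|T| + #|C| < #|A| + #|B| -> exists2 x, x \in A :&: B & x \notin C.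
Proof.
move=> hcard; apply/subsetPn/negP => /subset_leq_card hABC.
have := cardsUI A B; have := max_card (A :|: B); lia.
Qed.

Section AuditModel.
Variables (n : nat) (Reader V : eqType).
Local Notation ev := (event n Reader V).
Local Notation rec := (Reader * option V)%type.
Implicit Types (s pre dur : seq ev) (L : 'I_n -> option (seq rec)).

Lemma mem_audit t L r :
  0 < t -> ((r, evid L r) \in audit t L) = (t <= #|evid L r|).
Proof.
move=> t_gt0; rewrite mem_undup; apply/mapP/idP => [[r']|ht].
  by rewrite mem_filter => /andP [ht _] [-> _].
exists r => //; rewrite mem_filter ht /=.
have /set0Pn [k] : evid L r != set0 by rewrite -card_gt0 (leq_trans t_gt0).
rewrite inE => rk; apply/flattenP; exists (odflt [::] (L k)) => //.
by apply/mapP; exists k; rewrite ?mem_enum.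
Qed.

Lemma logs_split dur k Lk :
  logs dur k = Some Lk -> exists d1 d2, dur = d1 ++ GetLog k Lk :: d2.
Proof.
rewrite /logs; elim: dur => [//|e s IH] /=.
case E: (getlog_at k e) => [L'|] /=; last first.
  by move=> /IH [d1 [d2 ->]]; exists (e :: d1), d2.
case=> <-; exists [::], s; move: E; case: e => //= k' L0.
by case: eqP => // -> [->].
Qed.

Lemma log_of_cons k (e : ev) s :
  log_of k (e :: s) =
    if read_record k e is Some r then r :: log_of k s else log_of k s.
Proof. by []. Qed.

Lemma mem_log_of_resp s k p v :
  has (resp_of k p v) s -> (p, Some v) \in log_of k s.
Proof.
elim: s => [//|e s IH]; rewrite log_of_cons /=.
case/orP => [|/IH hin].
  case: e => //= k' p' [[v'|]|] //; case/and3P => /eqP-> /eqP-> /eqP->.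
  by rewrite eqxx inE eqxx.
by case: (read_record k e) => // ?; rewrite inE hin orbT.
Qed.

Lemma log_of_read_req s k p l :
  (p, l) \in log_of k s -> has (is_read_req k p) s.
Proof.
elim: s => [//|e s IH]; rewrite log_of_cons /=.
case E: (read_record k e) => [[p' l']|]; last by move=> /IH ->; rewrite orbT.
rewrite inE => /orP [/eqP [-> _]|/IH ->]; last by rewrite orbT.
move: E; case: e => //= k' p'' [r|//].
by case: (k' =P k) => // _ [-> _]; rewrite eqxx.
Qed.

Lemma providing_logged F pre dur p v k Lk :
  correct_objects F pre dur -> k \notin F -> k \in providing pre p v ->
  logs dur k = Some Lk -> (p, Some v) \in Lk.
Proof.
move=> hco kF; rewrite inE => /andP [_ hresp] /logs_split [d1 [d2 Edur]].
have Es : pre ++ dur = (pre ++ d1) ++ GetLog k Lk :: d2 by rewrite Edur catA.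
by rewrite (proj2 (hco k kF) _ _ _ Es) /log_of pmap_cat mem_cat mem_log_of_resp.
Qed.

Lemma logged_read_requested F correctR pre dur k Lk p l :
  correct_objects F pre dur -> signed_reads F correctR pre dur ->
  correctR p -> logs dur k = Some Lk -> (p, l) \in Lk ->
  has (is_read_req k p) (pre ++ dur).
Proof.
move=> hco hsr cp /logs_split [d1 [d2 Edur]] inL.
have Es : pre ++ dur = (pre ++ d1) ++ GetLog k Lk :: d2 by rewrite Edur catA.
suff req : has (is_read_req k p) (pre ++ d1) by rewrite Es has_cat req.
have [kF|kF] := boolP (k \in F); first exact: hsr Es cp inL.
by move: inL; rewrite (proj2 (hco k kF) _ _ _ Es) => /log_of_read_req.
Qed.

Lemma correct_reader_invoked correctR pre dur k p :
  correct_readers correctR pre dur -> correctR p ->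
  has (is_read_req k p) (pre ++ dur) -> has (is_inv p) (pre ++ dur).
Proof.
move=> hcr cp /has_split [s1 [e [s2 [Es req]]]].
case: e Es req => //= k' p' r Es /andP [_ /eqP Ep]; rewrite Ep in Es.
by rewrite Es has_cat (hcr _ _ _ _ _ Es cp).
Qed.

End AuditModel.

Theorem theorem4 (n f tau : nat) (Reader V : eqType)
  (F : {set 'I_n}) (correctR : pred Reader)
  (pre dur : seq (event n Reader V)) :
  #|F| <= f ->
  2 * f + 1 <= tau ->
  correct_objects F pre dur ->
  correct_readers correctR pre dur ->
  signed_reads F correctR pre dur ->
  audit_structure pre dur ->
  n - f <= #|responders dur| ->
  completeness 1 tau pre dur /\ weak_accuracy 1 correctR pre dur.
Proof.
move=> hF htau hco hcr hsr _ hR; split.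
- move=> p v hP; rewrite mem_audit // card_gt0; apply/set0Pn.
  have [|k /setIP [kP kR] kF] :=
    @quorum_intersection _ (providing pre p v) (responders dur) F.
    by rewrite card_ord; lia.
  move: kR; rewrite inE; case E: (logs dur k) => [Lk|//] _.
  by exists k; rewrite inE E (providing_logged hco kF kP E).
- move=> p cp hinv l; rewrite mem_audit // card_gt0; apply/set0Pn => -[k].
  rewrite inE; case E: (logs dur k) => [Lk|//] /= inL.
  have req := logged_read_requested hco hsr cp E inL.
  by rewrite (correct_reader_invoked hcr cp req) in hinv.
Qed.
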